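(* Let $\mathcal G$ be a constructor GRS over a finite signature $\mathcal F$ that is precedence terminating with argument separation, and suppose there is $d\in\mathbb N$ with $d\ge\max\big(\{\mathrm{ar}(f):f\in\mathcal F\}\cup\{|K{\restriction}r|:(K,l,r)\in\mathcal G_{\mathrm{fin}}\}\big)$ such that every rule $(K,l,r)\in\mathcal G_{\mathrm{inf}}$ satisfies: (i) $(K{\restriction}l)\cap\mathrm{nrm}$ is maximally shared; (ii) $K{\restriction}v$ is closed for every labeled $v\in\mathrm{nrm}(l)$; (iii) $\big|\{v\in\mathrm{nrm}(l):v\text{ unlabeled}\}\cup\bigcup_{v\in\mathrm{safe}(l)}V_{K\restriction v}\big|\le d$; (iv) $|K{\restriction}r|\le|K{\restriction}l|+\big|\bigcup_{v\in\mathrm{nrm}(r)}V_{K\restriction v}\big|$. Then there is a polynomial $p:\mathbb N\to\mathbb N$ such that for every closed basic term graph $G_0\in\mathcal{TG}(\mathcal F)$ and every term graph $G$, if $G_0\to^m_{\mathcal G}G$ then, writing $N=\bigcup_{v\in\mathrm{nrm}(\rho_{G_0})}V_{G_0\restriction v}$: (1) $m\le p(|N|)$; and (2) $|G|\le p(|N|)+|V_{G_0}\setminus N|$.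
   Context: Term graphs. $\mathcal F=\mathcal C\cup\mathcal D$ is a finite signature (constructors and defined symbols, disjoint) with arity function $\mathrm{ar}$. A labeled graph consists of a finite acyclic directed graph $(V_G,E_G)$, a partial labeling $\mathrm{lab}_G:V_G\to\mathcal F$ and a successor function $\mathrm{att}_G:V_G\to V_G^*$ such that $\mathrm{att}_G(v)$ has length $\mathrm{ar}(\mathrm{lab}_G(v))$ if $v$ is labeled and is empty otherwise, and the set of entries of $\mathrm{att}_G(v)$ equals $\{u:(v,u)\in E_G\}$. Unlabeled nodes act as variables. A term graph additionally has a root $\rho_G$ from which every node is reachable; $\mathcal{TG}(\mathcal F)$ is the set of term graphs over $\mathcal F$, $\mathcal{TG}(\mathcal C)$ those whose labeled nodes carry constructors. $G{\restriction}v$ is the sub-term graph of nodes reachable from $v$, rooted at $v$; $H\subseteq G$ means $H=G{\restriction}v$ for some $v$. $|G|=|V_G|$. $G$ is closed if every node is labeled; basic if $\mathrm{lab}_G(\rho_G)\in\mathcal D$ and $G{\restriction}v\in\mathcal{TG}(\mathcal C)$ for every successor $v$ of $\rho_G$. Choosing an injective map from unlabeled nodes to variables, each $G{\restriction}v$ has a term representation $\mathrm{term}(G{\restriction}v)$; $G$ is maximally shared if $\mathrm{term}(G{\restriction}u)=\mathrm{term}(G{\restriction}v)$ implies $u=v$. Argument separation. The argument positions of each $f\in\mathcal F$ are split into normal and safe ones; constructors have only safe positions; nodes with the same label have the same separation. $\mathrm{nrm}(v)$ (resp. $\mathrm{safe}(v)$) is the set of successors of $v$ at normal (resp. safe) positions.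 $H\sqsubset_{\mathrm{nrm}}G$ means $H\subseteq G{\restriction}v$ for some $v\in\mathrm{nrm}(\rho_G)$. For $G$ with $\mathrm{att}_G(\rho_G)=v_1,\dots,v_k;v_{k+1},\dots,v_{k+l}$, $G\cap\mathrm{nrm}$ is the term graph with root $\rho_G$ whose nodes are $\rho_G$, the nodes of $G{\restriction}v$ for $v\in\mathrm{nrm}(\rho_G)$ (with labels and successors from $G$), and $l$ fresh unlabeled nodes $u_1,\dots,u_l$, with $\mathrm{att}(\rho_G)=v_1,\dots,v_k;u_1,\dots,u_l$ (if no safe successor of the root is labeled, $G\cap\mathrm{nrm}=G$). Rewriting. Homomorphisms of labeled graphs preserve labels, successor sequences at labeled nodes (nothing required at unlabeled nodes) and the normal/safe split. A graph rewrite rule $(K,l,r)$ is a labeled graph $K$ with distinct nodes $l,r$ such that every unlabeled node of $K{\restriction}r$ lies in $K{\restriction}l$; it is a constructor rule if $K{\restriction}l$ is basic. A GRS is a (possibly infinite) set of rules; a constructor GRS consists of constructor rules. For a rule $(K,l,r)$ and homomorphism $\varphi:K{\restriction}l\to G$, the step $G\to_{\mathcal G}H$ is the standard build/redirection/garbage-collection step replacing $G{\restriction}\varphi(l)$ by an instance of $K{\restriction}r$ (new labeled nodes fresh, unlabeled nodes mapped via $\varphi$, edges into $\varphi(l)$ redirected to the image of $r$, unreachable nodes removed). $\to^m_{\mathcal G}$ is the $m$-fold iteration. $\mathcal D_{\mathrm{inf}}$ is the set of defined symbols labeling the left root of infinitely many rules of $\mathcal G$, $\mathcal D_{\mathrm{fin}}=\mathcal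 D\setminus\mathcal D_{\mathrm{inf}}$; $\mathcal G_{\mathrm{inf}}=\{(K,l,r)\in\mathcal G:\mathrm{lab}_K(l)\in\mathcal D_{\mathrm{inf}}\}$, $\mathcal G_{\mathrm{fin}}=\mathcal G\setminus\mathcal G_{\mathrm{inf}}$. Precedence termination with argument separation. A precedence $\sqsubset$ is a well-founded strict partial order on $\mathcal F$ with all constructors minimal. $H\sqsubset_{\mathrm{pt}}G$ holds if $\mathrm{lab}_H(v)\sqsubset\mathrm{lab}_G(\rho_G)$ for every labeled node $v$ of $H$ and either (1) $H=G{\restriction}u$ or $H\sqsubset_{\mathrm{pt}}G{\restriction}u$ for some successor $u$ of $\rho_G$; or (2) $\rho_H$ is labeled, $H{\restriction}v\sqsubset_{\mathrm{nrm}}G$ for each $v\in\mathrm{nrm}(\rho_H)$, and $H{\restriction}v\sqsubset_{\mathrm{pt}}G$ for each $v\in\mathrm{safe}(\rho_H)$. $\mathcal G$ is precedence terminating with argument separation if for some separation and precedence, $K{\restriction}r\sqsubset_{\mathrm{pt}}K{\restriction}l$ for every rule. *)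

From mathcomp Require Import all_boot all_order ssralg poly.
From Stdlib Require List.
Set Implicit Arguments. Unset Strict Implicit. Unset Printing Implicit Defensive.

Section TermGraphs.
Variable F : finType.

Record lgraph := LGraph { nodes : seq nat; lab : nat -> option F; att : nat -> seq nat }.

Definition succs (G : lgraph) (v : nat) : seq nat :=
  if v \in nodes G then att G v else [::].

Fixpoint reachn (G : lgraph) (n : nat) (v u : nat) : bool :=
  (v == u) || (if n is n'.+1 then has (fun w => reachn G n' w u) (succs G v) else false).

(* u is reachable from v (paths of length <= |V_G| suffice) *)
Definition reachb (G : lgraph) (v u : nat) : bool := reachn G (size (nodes G)) v u.

Definition acyclic (G : lgraph) : Prop :=
  forall v u, v \in nodes G -> u \in att G v -> ~~ reachb G u v.

Definition wf_lgraph (ar : F -> nat) (G : lgraph) : Prop :=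
  [/\ uniq (nodes G),
      (forall v, v \in nodes G ->
         (match lab G v with Some f => size (att G v) = ar f | None => att G v = [::] end)
         /\ all (fun u => u \in nodes G) (att G v))
    & acyclic G].

Record tgraph := TGraph { tg : lgraph; troot : nat }.

Definition wf_tgraph (ar : F -> nat) (G : tgraph) : Prop :=
  [/\ wf_lgraph ar (tg G), troot G \in nodes (tg G)
    & forall v, v \in nodes (tg G) -> reachb (tg G) (troot G) v].

Definition sub (G : lgraph) (v : nat) : tgraph :=
  TGraph (LGraph [seq u <- nodes G | reachb G v u] (lab G) (att G)) v.

Definition gsize (G : tgraph) : nat := size (nodes (tg G)).

Definition gclosed (G : tgraph) : Prop :=
  forall v, v \in nodes (tg G) -> lab (tg G) v <> None.

Definition constr_graph (isC : pred F) (G : tgraph) : Prop :=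
  forall v f, v \in nodes (tg G) -> lab (tg G) v = Some f -> isC f.

Definition basic (isC : pred F) (G : tgraph) : Prop :=
  (exists2 f, lab (tg G) (troot G) = Some f & ~~ isC f) /\
  (forall v, v \in att (tg G) (troot G) -> constr_graph isC (sub (tg G) v)).

Inductive term := Var of nat | Fun of F & seq term.

Fixpoint tm (G : lgraph) (n : nat) (v : nat) : term :=
  match n with
  | 0 => Var v
  | n'.+1 => match lab G v with
             | Some f => Fun f (map (tm G n') (att G v))
             | None => Var v
             end
  end.

Definition termof (G : tgraph) (v : nat) : term := tm (tg G) (size (nodes (tg G))).+1 v.

Definition max_shared (G : tgraph) : Prop :=
  forall u v, u \in nodes (tg G) -> v \in nodes (tg G) -> termof G u = termof G v -> u = v.

(* argument separation: sep f i = true iff position i of f is normal *)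
Variable sep : F -> nat -> bool.

Definition nrm (G : lgraph) (v : nat) : seq nat :=
  match lab G v with
  | Some f => mask [seq sep f i | i <- iota 0 (size (att G v))] (att G v)
  | None => [::]
  end.

Definition safe (G : lgraph) (v : nat) : seq nat :=
  match lab G v with
  | Some f => mask [seq ~~ sep f i | i <- iota 0 (size (att G v))] (att G v)
  | None => [::]
  end.

Definition nodes_below (G : lgraph) (s : seq nat) : seq nat :=
  undup (flatten [seq nodes (tg (sub G v)) | v <- s]).

(* G ∩ nrm : safe successors of the troot replaced by fresh unlabeled nodes
   (fresh names M + i, M larger than every node of G) *)
Definition cap_nrm (G : tgraph) : tgraph :=
  let K := tg G in
  let rho := troot G in
  match lab K rho with
  | None => G
  | Some f =>
    if all (fun v => lab K v == None) (safe K rho) then G else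
    let a := att K rho in
    let M := (foldr maxn rho (nodes K)).+1 in
    let posS := [seq i <- iota 0 (size a) | ~~ sep f i] in
    let newatt := [seq (if sep f i then nth 0 a i else M + i) | i <- iota 0 (size a)] in
    TGraph (LGraph (rho :: nodes_below K (nrm K rho) ++ [seq M + i | i <- posS])
                   (fun x => if M <= x then None else lab K x)
                   (fun x => if x == rho then newatt else if M <= x then [::] else att K x))
           rho
  end.

(* precedence termination with argument separation, for sub-term graphs
   H = K|h and G = K|g of a common labeled graph K *)
Section PT.
Variable prec : rel F.
Variable K : lgraph.

Definition lab_below (h g : nat) : Prop :=
  forall w f, w \in nodes (tg (sub K h)) -> lab K w = Some f ->
    exists2 f', lab K g = Some f' & prec f f'.

Inductive pt : nat -> nat -> Prop :=
| PT1 h g u : lab_below h g -> u \in att K g -> (h = u \/ pt h u) -> pt h g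
| PT2 h g : lab_below h g -> lab K h <> None ->
    (forall v, v \in nrm K h -> exists2 u, u \in nrm K g & reachb K u v) ->
    (forall v, v \in safe K h -> pt v g) -> pt h g.
End PT.

Record rule := Rule { rK : lgraph; rl : nat; rr : nat }.

Definition wf_rule (ar : F -> nat) (ru : rule) : Prop :=
  [/\ wf_lgraph ar (rK ru), rl ru \in nodes (rK ru), rr ru \in nodes (rK ru),
      rl ru <> rr ru
    & forall v, v \in nodes (tg (sub (rK ru) (rr ru))) -> lab (rK ru) v = None ->
        v \in nodes (tg (sub (rK ru) (rl ru)))].

Definition constructor_rule (isC : pred F) (ru : rule) : Prop :=
  basic isC (sub (rK ru) (rl ru)).

Definition rule_eq (r1 r2 : rule) : Prop :=
  [/\ rl r1 = rl r2, rr r1 = rr r2, nodes (rK r1) =i nodes (rK r2)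
    & forall v, v \in nodes (rK r1) ->
        lab (rK r1) v = lab (rK r2) v /\ att (rK r1) v = att (rK r2) v].

Variable GRS : rule -> Prop.

Definition left_label (ru : rule) : option F := lab (rK ru) (rl ru).

(* f labels the left troot of infinitely many rules *)
Definition D_inf (f : F) : Prop :=
  ~ exists s : seq rule, forall ru, GRS ru -> left_label ru = Some f ->
      exists2 ru', List.In ru' s & rule_eq ru ru'.

Definition in_G_inf (ru : rule) : Prop :=
  exists2 f, left_label ru = Some f & D_inf f.

Definition hom (K : lgraph) (l : nat) (G : lgraph) (phi : nat -> nat) : Prop :=
  forall v, v \in nodes (tg (sub K l)) ->
    phi v \in nodes G /\
    (forall f, lab K v = Some f -> lab G (phi v) = Some f /\ att G (phi v) = map phi (att K v)).

(* the result of applying rule ru at the match phi in G, new labeled nodes of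
   K|r being named by iota: build, redirect, garbage collect *)
Definition rewrite_result (G : tgraph) (ru : rule) (phi iota : nat -> nat) : tgraph :=
  let K := rK ru in
  let Lr := [seq v <- nodes (tg (sub K (rr ru))) | lab K v != None] in
  let img v := if lab K v is Some _ then iota v else phi v in
  let newn := map iota Lr in
  let pre x := nth 0 Lr (index x newn) in
  let labB x := if x \in newn then lab K (pre x) else lab (tg G) x in
  let attB x := if x \in newn then map img (att K (pre x)) else att (tg G) x in
  let a := phi (rl ru) in
  let b := img (rr ru) in
  let red y := if y == a then b else y in
  sub (LGraph (nodes (tg G) ++ newn) labB (fun x => map red (attB x))) (red (troot G)).

Definition tg_eq (H H' : tgraph) : Prop :=
  [/\ troot H = troot H', perm_eq (nodes (tg H)) (nodes (tg H'))
    & forall v, v \in nodes (tg H) ->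
        lab (tg H) v = lab (tg H') v /\ att (tg H) v = att (tg H') v].

Definition step (G H : tgraph) : Prop :=
  exists ru phi iota,
    [/\ GRS ru, hom (rK ru) (rl ru) (tg G) phi,
        (forall v w, v \in nodes (tg (sub (rK ru) (rr ru))) ->
                     w \in nodes (tg (sub (rK ru) (rr ru))) ->
                     lab (rK ru) v <> None -> lab (rK ru) w <> None ->
                     iota v = iota w -> v = w),
        (forall v, v \in nodes (tg (sub (rK ru) (rr ru))) -> lab (rK ru) v <> None ->
                   iota v \notin nodes (tg G))
      & tg_eq H (rewrite_result G ru phi iota)].

Inductive nsteps : nat -> tgraph -> tgraph -> Prop :=
| nsteps0 G : nsteps 0 G G
| nstepsS n G G' H : step G G' -> nsteps n G' H -> nsteps n.+1 G H.

End TermGraphs.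

Definition precedence (F : finType) (isC : pred F) (prec : rel F) : Prop :=
  [/\ irreflexive prec, transitive prec, well_founded (fun x y => prec x y)
    & forall c f, isC c -> ~~ prec f c].

Definition separation (F : finType) (isC : pred F) (sep : F -> nat -> bool) : Prop :=
  forall c i, isC c -> sep c i = false.

From mathcomp Require Import all_boot all_order ssralg poly zify.
From Stdlib Require Import Classical.
Set Implicit Arguments. Unset Strict Implicit. Unset Printing Implicit Defensive.

(* The proof is a potential argument.  Let rank f be the number of symbols
   below f in the precedence and B a bound, polynomial in n := |N|, on the
   number of nodes a single step creates.  Give every node labeled by a defined
   symbol f the weight B ^ rank f.  A step deletes its redex root and, by
   precedence termination, creates fewer than B nodes, all labeled by symbols
   below the root symbol; so the total weight decreases.  It is initially at
   most B ^ #|F|, which bounds the length of derivations, and each step adds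
   fewer than B nodes.
   B exists despite infinitely many rules because of an invariant: every
   normal argument of a node labeled f is a constructor graph with at most
   n + (#|F| - rank f) * d nodes.  Matches of the closed, maximally shared
   normal arguments of a rule are injective, so these arguments are no larger
   than those of the redex, and the normal arguments of created nodes sit
   below images of normal arguments of the left-hand side, growing by at most
   d per rank. *)

Lemma foldr_maxn_ge (s : seq nat) a x : x \in s -> x <= foldr maxn a s.
Proof.
elim: s => [|y s IH] //=; rewrite inE => /orP [/eqP-> | /IH h]; first by rewrite leq_maxl.
by rewrite (leq_trans h) // leq_maxr.
Qed.

Lemma sum_le_size (T : eqType) (s : seq T) (E : T -> nat) c :
  (forall z, z \in s -> E z <= c) -> \sum_(z <- s) E z <= size s * c.
Proof.
elim: s => [|y s IH] h; first by rewrite big_nil.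
rewrite big_cons /= mulSn leq_add ?h ?inE ?eqxx //.
by apply: IH => z zs; apply: h; rewrite inE zs orbT.
Qed.

Lemma leq_sum_subpred (T : eqType) (s : seq T) (P Q : pred T) (E : T -> nat) :
  (forall x, x \in s -> P x -> Q x) -> \sum_(x <- s | P x) E x <= \sum_(x <- s | Q x) E x.
Proof.
move=> h; rewrite big_mkcond [X in _ <= X]big_mkcond big_seq [X in _ <= X]big_seq.
by apply: leq_sum => x xs; case: ifP => // Px; rewrite h.
Qed.

Lemma index_map_in (T U : eqType) (f : T -> U) (s : seq T) x : {in s &, injective f} -> x \in s ->
  index (f x) (map f s) = index x s.
Proof.
elim: s => [|y s IH] //= inj; rewrite inE => /orP [/eqP-> | xs]; first by rewrite !eqxx.
case: eqP => [e | ne].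
  by rewrite (inj x y) ?eqxx // ?inE ?xs ?eqxx ?orbT.
case: eqP => [exy | _]; first by rewrite exy in ne.
congr S; apply: IH xs => u v us vs; apply: inj; by rewrite inE ?us ?vs orbT.
Qed.

Lemma eq_map_through (T U : eqType) (V : Type) (f : T -> U) (g : T -> V) (s1 s2 : seq T) :
  map f s1 = map f s2 -> (forall a b, a \in s1 -> b \in s2 -> f a = f b -> g a = g b) ->
  map g s1 = map g s2.
Proof.
elim: s1 s2 => [|a s1 IH] [|b s2] //= [e1 e2] h.
rewrite (h a b) ?inE ?eqxx // (IH s2 e2) // => x y xs ys; apply: h; by rewrite inE ?xs ?ys orbT.
Qed.

Lemma mask_split (T : eqType) (m : seq bool) (s : seq T) x : size m = size s -> x \in s ->
  x \in mask m s \/ x \in mask (map negb m) s.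
Proof.
elim: s m => [|y s IH] [|b m] //= [sz]; rewrite inE => /orP [/eqP-> | xs].
  by case: b; [left; rewrite inE eqxx | right; rewrite inE eqxx].
by case: (IH m sz xs) => h; case: b => /=; rewrite ?inE h ?orbT; auto.
Qed.

Lemma mask_all_false (T : Type) (m : seq bool) (s : seq T) : all negb m -> mask m s = [::].
Proof. by elim: m s => [|b m IH] [|y s] //= /andP [/negPf -> h]; apply: IH. Qed.

Section Reachability.
Variable F : finType.
Implicit Types G : lgraph F.

Definition edge G : rel nat := fun x y => y \in succs G x.
Definition reach G v u := exists2 p, path (edge G) v p & last v p = u.

Lemma succsE G x : x \in nodes G -> succs G x = att G x.
Proof. by rewrite /succs => ->. Qed.

Lemma reachn_reach G n v u : reachn G n v u -> reach G v u.
Proof.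
elim: n v => [|n IH] v /=.
  by rewrite orbF => /eqP->; exists [::].
case/orP => [/eqP-> | /hasP [w wS /IH [p pp pl]]]; first by exists [::].
by exists (w :: p) => //=; rewrite /edge wS.
Qed.

Lemma reachn_path G v p : path (edge G) v p -> reachn G (size p) v (last v p).
Proof.
elim: p v => [|w p IH] v /=; first by rewrite eqxx.
by case/andP => e pp; apply/orP; right; apply/hasP; exists w => //; exact: IH.
Qed.

Lemma reachn_leq G m n v u : m <= n -> reachn G m v u -> reachn G n v u.
Proof.
elim: m n v => [|m IH] [|n] v //=; first by rewrite orbF => _ ->.
move=> mn /orP [-> // | /hasP [w wS h]].
by apply/orP; right; apply/hasP; exists w => //; exact: IH.
Qed.

Lemma edge_nodes G x y : edge G x y -> x \in nodes G.
Proof. by rewrite /edge /succs; case: ifP. Qed.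

Lemma path_belast_nodes G v p : path (edge G) v p -> {subset belast v p <= nodes G}.
Proof.
elim: p v => [|w p IH] v //= /andP [e pp] x; rewrite inE => /orP [/eqP-> | xi].
  exact: edge_nodes e.
exact: IH pp x xi.
Qed.

(* A shortest path visits no node twice, so its length is below |V_G|. *)
Lemma reachbP G v u : reflect (reach G v u) (reachb G v u).
Proof.
apply: (iffP idP); first exact: reachn_reach.
case=> p pp <-; case: (shortenP pp) => p' pp' up' _.
apply: (reachn_leq _ (reachn_path pp')).
rewrite -(size_belast v p'); apply: uniq_leq_size; last exact: path_belast_nodes pp'.
by move: up'; rewrite lastI rcons_uniq => /andP [].
Qed.

Lemma reach_refl G v : reach G v v. Proof. by exists [::]. Qed.

Lemma reachb_refl G v : reachb G v v.
Proof. by apply/reachbP; exact: reach_refl. Qed.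

Lemma reach_trans G v w u : reach G v w -> reach G w u -> reach G v u.
Proof.
case=> p pp <- [q qq <-]; exists (p ++ q); first by rewrite cat_path pp.
by rewrite last_cat.
Qed.

Lemma reach_succ G v w u : w \in succs G v -> reach G w u -> reach G v u.
Proof. by move=> e; apply: reach_trans; exists [:: w] => //=; rewrite /edge e. Qed.

Lemma reach_att G v w : v \in nodes G -> w \in att G v -> reach G v w.
Proof. by move=> vn wv; apply: reach_succ (reach_refl _ _); rewrite succsE. Qed.

Lemma reach_first G v u : reach G v u -> u = v \/ exists2 w, w \in succs G v & reach G w u.
Proof.
case=> [[|w p]] /=; first by left.
by case/andP => e pp <-; right; exists w => //; exists p.
Qed.

Lemma reach_last G v u : reach G v u -> u = v \/ exists2 w, reach G v w & u \in succs G w.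
Proof.
case=> p; elim/last_ind: p => [|p x _] /=; first by left.
rewrite rcons_path last_rcons => /andP [pp e] <-; right; exists (last v p) => //.
by exists p.
Qed.

Lemma reach_closed G (Q : nat -> Prop) v w :
  (forall x y, Q x -> y \in succs G x -> Q y) -> Q v -> reach G v w -> Q w.
Proof.
move=> hQ qv [p]; elim: p v qv => [|y p IH] v qv /=; first by move=> _ <-.
by case/andP => e pp pl; apply: IH pp pl; apply: hQ qv e.
Qed.

Lemma reach_leaf G v w : att G v = [::] -> reach G v w -> w = v.
Proof.
move=> hatt [[|y p]] //= /andP [e _] _; move: e.
by rewrite /edge /succs hatt; case: ifP.
Qed.

Definition succ_closed G := forall x, x \in nodes G -> {subset att G x <= nodes G}.

Lemma reach_nodes G v w : succ_closed G -> v \in nodes G -> reach G v w -> w \in nodes G.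
Proof.
move=> hG vn; apply: (reach_closed (Q := fun x => x \in nodes G)) => // x y xn.
by rewrite succsE //; apply: hG.
Qed.

Lemma mem_sub_nodes G v x : (x \in nodes (tg (sub G v))) = (x \in nodes G) && reachb G v x.
Proof. by rewrite /= mem_filter andbC. Qed.

Lemma sub_nodesP G v x : reflect (x \in nodes G /\ reach G v x) (x \in nodes (tg (sub G v))).
Proof. by rewrite mem_sub_nodes; apply: (iffP andP) => -[a /reachbP b]. Qed.

Lemma sub_nodes_trans G v w x :
  w \in nodes (tg (sub G v)) -> x \in nodes (tg (sub G w)) -> x \in nodes (tg (sub G v)).
Proof.
move=> /sub_nodesP [_ vw] /sub_nodesP [xn wx].
by apply/sub_nodesP; split => //; apply: reach_trans wx.
Qed.

Lemma reach_in_sub G s v w : reach G s v -> reach G v w -> reach (tg (sub G s)) v w.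
Proof.
move=> sv [p]; elim: p v sv => [|y p IH] v sv /=; first by move=> _ <-; exact: reach_refl.
case/andP => e pp pl; have vn := edge_nodes e.
have sy : reach G s y by apply: reach_trans sv _; exists [:: y] => //=; rewrite e.
apply: reach_succ (IH y sy pp pl).
rewrite succsE; last by rewrite mem_sub_nodes vn; apply/reachbP.
by move: e; rewrite /edge succsE.
Qed.

Lemma reach_of_sub G s v w : reach (tg (sub G s)) v w -> reach G v w.
Proof.
case=> p; elim: p v => [|y p IH] v /=; first by move=> _ <-; exact: reach_refl.
case/andP => e pp pl; have := edge_nodes e; rewrite mem_sub_nodes => /andP [vn _].
apply: reach_succ (IH y pp pl); move: e; rewrite /edge /succs /=.
by rewrite mem_filter; case: ifP => // /andP [_ ->].
Qed.

Lemma sub_sub_nodes G s v w :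
  w \in nodes (tg (sub (tg (sub G s)) v)) -> [/\ w \in nodes G, reach G v w & reach G s w].
Proof.
by move=> /sub_nodesP [/sub_nodesP [wn sw] /reach_of_sub vw].
Qed.

Lemma gsize_gt0 G x : x \in nodes G -> 0 < gsize (sub G x).
Proof.
move=> xn; rewrite /gsize lt0n size_eq0 -has_filter.
by apply/hasP; exists x => //; rewrite reachb_refl.
Qed.

Lemma gsize_reach G x y : uniq (nodes G) -> reach G x y -> gsize (sub G y) <= gsize (sub G x).
Proof.
move=> un xy; apply: uniq_leq_size; first by rewrite filter_uniq.
by move=> w /sub_nodesP [wn yw]; apply/sub_nodesP; split => //; apply: reach_trans yw.
Qed.

Lemma gsize_att_lt G x y : uniq (nodes G) -> acyclic G -> x \in nodes G -> y \in att G x ->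
  gsize (sub G y) < gsize (sub G x).
Proof.
move=> un ac xn yx; rewrite /gsize.
have: uniq (x :: nodes (tg (sub G y))).
  by rewrite /= filter_uniq // andbT mem_sub_nodes negb_and (ac x y xn yx) orbT.
move/uniq_leq_size; apply=> w; rewrite inE => /orP [/eqP-> | ].
  by rewrite mem_sub_nodes xn reachb_refl.
move/sub_nodesP => [wn yw]; apply/sub_nodesP; split => //.
by apply: reach_succ yw; rewrite succsE.
Qed.

Lemma nodes_belowP G s w :
  reflect (exists2 v, v \in s & w \in nodes (tg (sub G v))) (w \in nodes_below G s).
Proof. by rewrite /nodes_below mem_undup; apply: flatten_mapP. Qed.

Lemma tg_eq_succs (H H' : tgraph F) x : tg_eq H H' -> succs (tg H) x = succs (tg H') x.
Proof.
case=> _ pm hl; rewrite /succs -(perm_mem pm); case: ifP => // xn.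
by case: (hl x xn).
Qed.

Lemma tg_eq_reachb (H H' : tgraph F) v w : tg_eq H H' -> reachb (tg H) v w = reachb (tg H') v w.
Proof.
move=> teq; have e : edge (tg H) =2 edge (tg H') by move=> x y; rewrite /edge (tg_eq_succs x teq).
by apply/reachbP/reachbP => -[p pp pl]; exists p => //; move: pp; rewrite (eq_path e).
Qed.

Lemma tg_eq_gsize (H H' : tgraph F) v : tg_eq H H' -> gsize (sub (tg H) v) = gsize (sub (tg H') v).
Proof.
move=> teq; have [_ pm _] := teq.
rewrite /gsize /= (eq_filter (a2 := reachb (tg H') v)).
  by apply: perm_size; apply: perm_filter.
by move=> w; rewrite (tg_eq_reachb _ _ teq).
Qed.

End Reachability.

Section Separation.
Variables (F : finType) (sep : F -> nat -> bool).
Implicit Types G : lgraph F.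

Lemma nrm_att G x v : v \in nrm sep G x -> v \in att G x.
Proof. by rewrite /nrm; case: (lab G x) => // f; apply: mem_mask. Qed.

Lemma att_nrm_or_safe G x v f : lab G x = Some f -> v \in att G x ->
  v \in nrm sep G x \/ v \in safe sep G x.
Proof.
rewrite /nrm /safe => -> vx.
have := @mask_split _ [seq sep f i | i <- iota 0 (size (att G x))] (att G x) v.
by rewrite size_map size_iota -map_comp => /(_ erefl vx).
Qed.

Lemma nrm_constructor (isC : pred F) G x c : separation isC sep ->
  lab G x = Some c -> isC c -> nrm sep G x = [::].
Proof.
move=> hs; rewrite /nrm => -> cC; apply: mask_all_false; apply/allP => b /mapP [i _ ->].
by rewrite hs.
Qed.

Lemma nrm_map G G' x x' (h : nat -> nat) : lab G' x' = lab G x -> att G' x' = map h (att G x) ->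
  nrm sep G' x' = map h (nrm sep G x).
Proof. by rewrite /nrm => -> ->; case: (lab G x) => // f; rewrite map_mask size_map. Qed.

End Separation.

Lemma pt_lab_below (F : finType) sep prec (K : lgraph F) h g :
  pt sep prec K h g -> lab_below prec K h g.
Proof. by case. Qed.

Section RuleFacts.
Variables (F : finType) (ar : F -> nat) (isC : pred F) (sep : F -> nat -> bool) (prec : rel F).
Variable ru : rule F.
Hypothesis wfr : wf_rule ar ru.
Hypothesis cr : constructor_rule isC ru.

Local Notation K := (rK ru).
Local Notation l := (rl ru).
Local Notation r := (rr ru).

Lemma K_wf : wf_lgraph ar K. Proof. by case: wfr. Qed.
Lemma K_uniq : uniq (nodes K). Proof. by case: K_wf. Qed.
Lemma K_acyclic : acyclic K. Proof. by case: K_wf. Qed.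
Lemma K_succ_closed : succ_closed K. Proof. by case: K_wf => _ h _ x /h [_ /allP]. Qed.

Lemma K_unlabeled_leaf x : x \in nodes K -> lab K x = None -> att K x = [::].
Proof. by case: K_wf => _ h _ /h [+ _] => + e; rewrite e. Qed.

Lemma K_arity x f : x \in nodes K -> lab K x = Some f -> size (att K x) = ar f.
Proof. by case: K_wf => _ h _ /h [+ _] => + e; rewrite e. Qed.

Lemma l_nodes : l \in nodes K. Proof. by case: wfr. Qed.
Lemma r_nodes : r \in nodes K. Proof. by case: wfr. Qed.
Lemma l_neq_r : l <> r. Proof. by case: wfr. Qed.

Lemma l_sub_l : l \in nodes (tg (sub K l)).
Proof. by rewrite mem_sub_nodes l_nodes reachb_refl. Qed.

Lemma r_sub_r : r \in nodes (tg (sub K r)).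
Proof. by rewrite mem_sub_nodes r_nodes reachb_refl. Qed.

Lemma r_unlabeled_in_l v :
  v \in nodes (tg (sub K r)) -> lab K v = None -> v \in nodes (tg (sub K l)).
Proof. by move=> h1 h2; case: wfr => _ _ _ _; apply. Qed.

Lemma att_l_sub u : u \in att K l -> u \in nodes (tg (sub K l)).
Proof.
move=> ul; apply/sub_nodesP; split; first exact: (K_succ_closed l_nodes ul).
exact: reach_att l_nodes ul.
Qed.

Lemma l_defined : exists2 f, lab K l = Some f & ~~ isC f.
Proof. by case: cr => -[f e1 e2] _; exists f. Qed.

Lemma reach_arg_l_constructor c w g :
  c \in att K l -> w \in nodes K -> reach K c w -> lab K w = Some g -> isC g.
Proof.
move=> cl wn cw lw; case: cr => _ /(_ c cl) h; apply: (h w) => //.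
rewrite mem_sub_nodes mem_sub_nodes wn /=; apply/andP; split; apply/reachbP.
  by apply: reach_succ cw; rewrite succsE // l_nodes.
by apply: reach_in_sub cw; exact: reach_att l_nodes cl.
Qed.

Hypothesis hsep : separation isC sep.
Hypothesis hprec : precedence isC prec.

(* The arguments of l are constructor graphs, and constructors are minimal. *)
Lemma pt_arg_l_unlabeled h u : pt sep prec K h u -> u \in att K l ->
  forall w, w \in nodes (tg (sub K h)) -> lab K w = None.
Proof.
move=> /pt_lab_below lb ul w wh; case e: (lab K w) => [f|] //.
case: (lb w f wh e) => f' e' pf.
have := reach_arg_l_constructor ul (K_succ_closed l_nodes ul) (reach_refl _ _) e'.
by case: hprec => _ _ _ /(_ f' f) minC /minC; rewrite pf.
Qed.

(* A node reached from h along a [PT1] step, or through a normal successor in a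
   [PT2] step, lies in an argument of l, where constructors have no normal
   successors; safe successors are handled by induction. *)
Lemma pt_nrm_below h : pt sep prec K h l ->
  forall x y, x \in nodes K -> reach K h x -> y \in nrm sep K x ->
  exists2 u, u \in nrm sep K l & reach K u y.
Proof.
suff: forall g, pt sep prec K h g -> g = l -> forall x y, x \in nodes K -> reach K h x ->
  y \in nrm sep K x -> exists2 u, u \in nrm sep K l & reach K u y by move=> H /(H l); apply.
move=> g H; elim: H => {h g}.
- move=> h g u lb ug hu gl x y xn hx yx; subst g.
  case lx: (lab K x) => [gx|]; last by rewrite /nrm lx in yx.
  case: hu => [eh | ptu]; last first.
    have : x \in nodes (tg (sub K h)) by rewrite mem_sub_nodes xn; apply/reachbP.
    by move/(pt_arg_l_unlabeled ptu ug); rewrite lx.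
  subst h; have gC := reach_arg_l_constructor ug xn hx lx.
  by rewrite (nrm_constructor hsep lx gC) in yx.
- move=> h g lb lh hn hs IH gl x y xn hx yx; subst g.
  case: (reach_first hx) => [exh | [c ch cx]].
    by subst x; case: (hn y yx) => u ul /reachbP; exists u.
  have hnK : h \in nodes K by move: ch; rewrite /succs; case: ifP.
  rewrite succsE // in ch.
  case e: (lab K h) => [fh|]; last by [].
  case: (att_nrm_or_safe sep e ch) => [cn | cs]; last exact: IH cs erefl x y xn cx yx.
  case: (hn c cn) => u ul /reachbP uc.
  case lx: (lab K x) => [gx|]; last by rewrite /nrm lx in yx.
  have gC := reach_arg_l_constructor (nrm_att ul) xn (reach_trans uc cx) lx.
  by rewrite (nrm_constructor hsep lx gC) in yx.
Qed.

End RuleFacts.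

Section Match.
Variables (F : finType) (ar : F -> nat) (isC : pred F) (sep : F -> nat -> bool).
Variable ru : rule F.
Hypothesis wfr : wf_rule ar ru.
Hypothesis cr : constructor_rule isC ru.
Local Notation K := (rK ru).
Local Notation l := (rl ru).
Variable G : lgraph F.
Variable phi : nat -> nat.
Hypothesis hphi : hom K l G phi.

Lemma hom_reach x y : x \in nodes (tg (sub K l)) -> reach K x y ->
  reach G (phi x) (phi y) /\ y \in nodes (tg (sub K l)).
Proof.
move=> xl [p]; elim: p x xl => [|z p IH] x xl /=.
  by move=> _ <-; split => //; exact: reach_refl.
case/andP => e pp pl; have xn := edge_nodes e; move: e; rewrite /edge succsE // => zx.
case ex: (lab K x) => [f|]; last by rewrite (K_unlabeled_leaf wfr xn ex) in zx.
have [pxn /(_ f ex) [_ attx]] := hphi xl.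
have zl : z \in nodes (tg (sub K l)).
  apply: sub_nodes_trans xl _; apply/sub_nodesP.
  by split; [exact: (K_succ_closed wfr xn zx) | exact: reach_att].
case: (IH z zl pp pl) => h1 h2; split => //; apply: reach_succ h1.
by rewrite succsE // attx map_f.
Qed.

Variable u : nat.
Hypothesis ul : u \in nrm sep K l.
Hypothesis ucl : gclosed (sub K u).
Hypothesis ms : max_shared (cap_nrm sep (sub K l)).

Local Notation S := (nodes (tg (sub K u))).

Lemma arg_sub_l z : z \in S -> z \in nodes (tg (sub K l)).
Proof. exact: sub_nodes_trans (att_l_sub wfr (nrm_att ul)). Qed.

Lemma arg_att_closed x y : x \in S -> y \in att K x -> y \in S.
Proof.
move=> xS yx; have [xn _] := sub_nodesP _ _ _ xS.
apply: sub_nodes_trans xS _; apply/sub_nodesP.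
by split; [exact: (K_succ_closed wfr xn yx) | exact: reach_att].
Qed.

(* The argument survives unchanged in (K|l) ∩ nrm, where maximal sharing applies. *)
Lemma cap_nrm_arg z : z \in S ->
  [/\ z \in nodes (tg (cap_nrm sep (sub K l))),
      lab (tg (cap_nrm sep (sub K l))) z = lab K z
    & att (tg (cap_nrm sep (sub K l))) z = att K z].
Proof.
move=> zS; have zl := arg_sub_l zS; have uatt : u \in att K l := nrm_att ul.
have zneq : z != l.
  apply/eqP => ezl; move/sub_nodesP: zS => [_ uz]; subst z.
  by have := K_acyclic wfr (l_nodes wfr) uatt; rewrite (introT (reachbP _ _ _) uz).
rewrite /cap_nrm /=; case: (l_defined cr) => f -> _.
case: ifP => _ //=; split.
- rewrite inE mem_cat; apply/orP; right; apply/orP; left.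
  apply/nodes_belowP; exists u => //.
  move/sub_nodesP: zS => [zn uz]; apply/sub_nodesP; split => //.
  by apply: reach_in_sub uz; move/sub_nodesP: (att_l_sub wfr uatt) => [].
- by rewrite leqNgt ltnS foldr_maxn_ge.
- by rewrite (negPf zneq) leqNgt ltnS foldr_maxn_ge.
Qed.

Lemma hom_tm_eq (Gc : lgraph F) :
  (forall z, z \in S -> lab Gc z = lab K z /\ att Gc z = att K z) ->
  forall n x y, x \in S -> y \in S -> gsize (sub K x) <= n -> gsize (sub K y) <= n ->
    phi x = phi y -> tm Gc n x = tm Gc n y.
Proof.
move=> hGc; elim=> [|n IH] x y xS yS hx hy pxy.
  by move: hx; rewrite leqNgt gsize_gt0 //; case/sub_nodesP: xS.
have [xn _] := sub_nodesP _ _ _ xS; have [yn _] := sub_nodesP _ _ _ yS.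
case ex: (lab K x) => [gx|]; last by case: (ucl xS).
case ey: (lab K y) => [gy|]; last by case: (ucl yS).
have [_ /(_ gx ex) [lx ax]] := hphi (arg_sub_l xS).
have [_ /(_ gy ey) [ly ay]] := hphi (arg_sub_l yS).
have [lcx acx] := hGc x xS; have [lcy acy] := hGc y yS.
rewrite /= lcx lcy ex ey acx acy.
move: lx ly; rewrite pxy => -> [<-]; congr Fun.
apply: (eq_map_through (f := phi)); first by rewrite -ax -ay pxy.
move=> a b ax' by' pab; apply: IH (arg_att_closed xS ax') (arg_att_closed yS by') _ _ pab.
  by rewrite -ltnS (leq_trans _ hx) // (gsize_att_lt (K_uniq wfr) (K_acyclic wfr)).
by rewrite -ltnS (leq_trans _ hy) // (gsize_att_lt (K_uniq wfr) (K_acyclic wfr)).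
Qed.

(* Nodes of the argument with the same image have the same term, since the match
   preserves labels and successors and the argument has no variables; maximal
   sharing then identifies them. *)
Lemma hom_inj_arg : {in S &, injective phi}.
Proof.
move=> x y xS yS pxy; set Kc := cap_nrm sep (sub K l).
have depth z : z \in S -> gsize (sub K z) <= (size (nodes (tg Kc))).+1.
  move=> zS; apply: leqW; apply: uniq_leq_size; first by rewrite filter_uniq // (K_uniq wfr).
  by move=> w wz; case: (cap_nrm_arg (sub_nodes_trans zS wz)).
apply: ms; [by case: (cap_nrm_arg xS) | by case: (cap_nrm_arg yS) |].
apply: (hom_tm_eq (Gc := tg Kc)) => //; try exact: depth.
by move=> z zS; case: (cap_nrm_arg zS).
Qed.

Lemma gsize_arg_le_image : gsize (sub K u) <= gsize (sub G (phi u)).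
Proof.
rewrite /gsize -(size_map phi); apply: uniq_leq_size.
  by rewrite (map_inj_in_uniq hom_inj_arg) filter_uniq // (K_uniq wfr).
move=> y /mapP [w wS ->]; have [pn _] := hphi (arg_sub_l wS).
rewrite mem_sub_nodes pn /=; apply/reachbP.
move/sub_nodesP: wS => [_ uw].
by case: (hom_reach (att_l_sub wfr (nrm_att ul)) uw).
Qed.

End Match.

Section RuleSize.
Variables (F : finType) (ar : F -> nat) (isC : pred F) (sep : F -> nat -> bool) (prec : rel F).
Variable ru : rule F.
Hypothesis wfr : wf_rule ar ru.
Hypothesis cr : constructor_rule isC ru.
Local Notation K := (rK ru).
Local Notation l := (rl ru).
Local Notation r := (rr ru).
Variable G : lgraph F.
Variable phi : nat -> nat.
Hypothesis hphi : hom K l G phi.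
Variables (d bound : nat).
Hypothesis hard : forall f, ar f <= d.
Hypothesis himage : forall u, u \in nrm sep K l -> lab K u <> None ->
  gsize (sub G (phi u)) <= bound.
Hypothesis hms : max_shared (cap_nrm sep (sub K l)).
Hypothesis hclosed : forall v, v \in nrm sep K l -> lab K v <> None -> gclosed (sub K v).
Hypothesis hsmall : size (undup ([seq v <- nrm sep K l | lab K v == None]
                      ++ nodes_below K (safe sep K l))) <= d.
Hypothesis hrhs :
  gsize (sub K r) <= gsize (sub K l) + size (nodes_below K (nrm sep K r)).

(* Besides l, the nodes of K|l lie in [small], bounded by d, or in a labeled
   normal argument, bounded through the injective match. *)
Let small := undup ([seq v <- nrm sep K l | lab K v == None] ++ nodes_below K (safe sep K l)).
Let large := flatten [seq nodes (tg (sub K v)) | v <- [seq v <- nrm sep K l | lab K v != None]].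

Lemma nrm_l_cover : {subset nodes_below K (nrm sep K l) <= small ++ large}.
Proof.
move=> w /nodes_belowP [v vn wv]; rewrite mem_cat.
have vK : v \in nodes K by exact: (K_succ_closed wfr (l_nodes wfr) (nrm_att vn)).
case e: (lab K v) => [g|].
  by apply/orP; right; apply/flatten_mapP; exists v => //; rewrite mem_filter vn e.
apply/orP; left; rewrite mem_undup mem_cat mem_filter.
by move/sub_nodesP: wv => [_ /(reach_leaf (K_unlabeled_leaf wfr vK e)) ->]; rewrite vn e.
Qed.

Lemma sub_l_cover : {subset nodes (tg (sub K l)) <= l :: (small ++ large)}.
Proof.
move=> w /sub_nodesP [wn lw]; rewrite inE.
case: (reach_first lw) => [-> | [c cs cw]]; first by rewrite eqxx.
rewrite succsE ?(l_nodes wfr) // in cs; apply/orP; right.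
case: (l_defined cr) => f lf _.
case: (att_nrm_or_safe sep lf cs) => [cn | cS].
  by apply: nrm_l_cover; apply/nodes_belowP; exists c => //; apply/sub_nodesP.
rewrite mem_cat mem_undup mem_cat; apply/orP; left; apply/orP; right.
by apply/nodes_belowP; exists c => //; apply/sub_nodesP.
Qed.

Lemma size_large : size large <= d * bound.
Proof.
rewrite /large size_flatten /shape -map_comp sumnE big_map.
apply: (leq_trans (sum_le_size (c := bound) _)).
  move=> v; rewrite mem_filter => /andP [/eqP lv vn] /=.
  exact: leq_trans (gsize_arg_le_image wfr cr hphi vn (hclosed vn lv) hms) (himage vn lv).
rewrite leq_mul2r; apply/orP; right.
rewrite size_filter; apply: leq_trans (count_size _ _) _.
case: (l_defined cr) => f lf _; rewrite /nrm lf.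
apply: leq_trans (size_subseq (mask_subseq _ _)) _.
by rewrite (K_arity wfr (l_nodes wfr) lf) hard.
Qed.

Lemma gsize_lhs : gsize (sub K l) <= 1 + d + d * bound.
Proof.
rewrite /gsize; apply: leq_trans (uniq_leq_size (filter_uniq _ (K_uniq wfr)) sub_l_cover) _.
by rewrite /= size_cat add1n addSn ltnS leq_add // size_large.
Qed.

Lemma size_nrm_lhs : size (nodes_below K (nrm sep K l)) <= d + d * bound.
Proof.
apply: leq_trans (uniq_leq_size (undup_uniq _) nrm_l_cover) _.
by rewrite size_cat leq_add // size_large.
Qed.

Hypothesis hsep : separation isC sep.
Hypothesis hprec : precedence isC prec.
Hypothesis ptr : pt sep prec K r l.

Lemma nrm_rhs_sub_lhs : {subset nodes_below K (nrm sep K r) <= nodes_below K (nrm sep K l)}.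
Proof.
move=> w /nodes_belowP [v vn wv].
have [u un uv] := pt_nrm_below wfr cr hsep hprec ptr (r_nodes wfr) (reach_refl _ _) vn.
apply/nodes_belowP; exists u => //.
by move/sub_nodesP: wv => [wn vw]; apply/sub_nodesP; split => //; apply: reach_trans vw.
Qed.

Lemma gsize_rhs_inf : gsize (sub K r) <= 2 + 2 * d + 2 * (d * bound).
Proof.
apply: leq_trans hrhs _.
have := uniq_leq_size (undup_uniq _) nrm_rhs_sub_lhs => h.
apply: leq_trans (leq_add gsize_lhs (leq_trans h size_nrm_lhs)) _.
lia.
Qed.

End RuleSize.

Section Derivations.
Variables (F : finType) (ar : F -> nat) (isC : pred F) (GRS : rule F -> Prop)
  (sep : F -> nat -> bool) (prec : rel F) (d : nat).
Hypothesis hgrs : forall ru, GRS ru -> wf_rule ar ru /\ constructor_rule isC ru.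
Hypothesis hsep : separation isC sep.
Hypothesis hprec : precedence isC prec.
Hypothesis hpt : forall ru, GRS ru -> pt sep prec (rK ru) (rr ru) (rl ru).
Hypothesis hard : forall f, ar f <= d.
Hypothesis hfin : forall ru, GRS ru -> ~ in_G_inf GRS ru -> gsize (sub (rK ru) (rr ru)) <= d.
Hypothesis hinf : forall ru, GRS ru -> in_G_inf GRS ru ->
     let K := rK ru in
     [/\ max_shared (cap_nrm sep (sub K (rl ru))),
         (forall v, v \in nrm sep K (rl ru) -> lab K v <> None -> gclosed (sub K v)),
         size (undup ([seq v <- nrm sep K (rl ru) | lab K v == None]
                      ++ nodes_below K (safe sep K (rl ru)))) <= d
       & gsize (sub K (rr ru)) <=
           gsize (sub K (rl ru)) + size (nodes_below K (nrm sep K (rr ru)))].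

(* [n] bounds the size of the normal arguments of the initial term graph. *)
Variable n : nat.

Definition rank (g : F) := #|[pred h | prec h g]|.
Definition nrm_bound (g : F) := n + (#|F| - rank g) * d.
Definition arg_bound := n + #|F| * d.
(* Exceeds the size of the right-hand side of every rule applicable in a
   graph satisfying the invariant (see [gsize_rhs_inf]). *)
Definition step_bound := 3 + 2 * d + 2 * (d * arg_bound).

Definition weight (o : option F) :=
  if o is Some g then (if isC g then 0 else step_bound ^ rank g) else 0.
Definition potential (G : tgraph F) := \sum_(x <- nodes (tg G)) weight (lab (tg G) x).

Definition bounded_arg (G : lgraph F) (g : F) (v : nat) :=
  (forall w c, w \in nodes G -> reach G v w -> lab G w = Some c -> isC c) /\
  gsize (sub G v) <= nrm_bound g.

Definition nrm_args_bounded (G : lgraph F) :=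
  forall x g v, x \in nodes G -> lab G x = Some g -> v \in nrm sep G x -> bounded_arg G g v.

(* Acyclicity is carried as a height function, which is easier to transport
   along a rewrite step than [acyclic]. *)
Definition invariant (G : tgraph F) :=
  [/\ uniq (nodes (tg G)), succ_closed (tg G),
      exists ht : nat -> nat, forall x y, x \in nodes (tg G) -> y \in att (tg G) x -> ht y < ht x
    & nrm_args_bounded (tg G)].

Lemma rank_lt h g : prec h g -> rank h < rank g.
Proof.
move=> hg; apply: proper_card; apply/properP; split.
  apply/subsetP => x; rewrite !inE => xh.
  by case: hprec => _ tr _ _; apply: tr xh hg.
by exists h; rewrite !inE ?hg //; case: hprec => irr _ _ _; rewrite irr.
Qed.

Lemma rank_le g : rank g <= #|F|.
Proof. exact: max_card. Qed.

Lemma nrm_bound_rank g f : rank g < rank f -> nrm_bound f + d <= nrm_bound g.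
Proof.
move=> lt; have := rank_le f; rewrite /nrm_bound => le.
have h : (#|F| - rank f).+1 <= #|F| - rank g by lia.
by have := leq_mul h (leqnn d); rewrite mulSn; lia.
Qed.

Lemma nrm_bound_le f : nrm_bound f <= arg_bound.
Proof. by rewrite /nrm_bound /arg_bound leq_add2l leq_mul // leq_subr. Qed.

Lemma step_bound_gt0 : 0 < step_bound. Proof. by []. Qed.

Lemma step_bound_gt_d : d < step_bound. Proof. rewrite /step_bound; lia. Qed.

Lemma step_bound_linear : step_bound <= (3 + 4 * d + 2 * (#|F| * d * d)) * (n + 1).
Proof. rewrite /step_bound /arg_bound; nia. Qed.

Section OneStep.
Variable G : tgraph F.
Hypothesis uniqG : uniq (nodes (tg G)).
Hypothesis succG : succ_closed (tg G).
Variable ht : nat -> nat.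
Hypothesis hht : forall x y, x \in nodes (tg G) -> y \in att (tg G) x -> ht y < ht x.
Hypothesis argsG : nrm_args_bounded (tg G).
Variables (ru : rule F) (phi iota : nat -> nat).
Hypothesis gru : GRS ru.
Hypothesis hphi : hom (rK ru) (rl ru) (tg G) phi.
Hypothesis iinj : forall v w, v \in nodes (tg (sub (rK ru) (rr ru))) ->
                     w \in nodes (tg (sub (rK ru) (rr ru))) ->
                     lab (rK ru) v <> None -> lab (rK ru) w <> None ->
                     iota v = iota w -> v = w.
Hypothesis ifresh : forall v, v \in nodes (tg (sub (rK ru) (rr ru))) -> lab (rK ru) v <> None ->
                   iota v \notin nodes (tg G).

Let wfr := (hgrs gru).1.
Let cr := (hgrs gru).2.
Let ptr := hpt gru.
Local Notation K := (rK ru).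
Local Notation l := (rl ru).
Local Notation r := (rr ru).

(* The local definitions of [rewrite_result]: [C] is the graph after building
   and redirection; garbage collection takes the sub-term graph at [root']. *)
Let created := [seq v <- nodes (tg (sub K r)) | lab K v != None].
Let img v := if lab K v is Some _ then iota v else phi v.
Let fresh := map iota created.
Let pre x := nth 0 created (index x fresh).
Let labB x := if x \in fresh then lab K (pre x) else lab (tg G) x.
Let attB x := if x \in fresh then map img (att K (pre x)) else att (tg G) x.
Let a := phi l.
Let b := img r.
Let redirect y := if y == a then b else y.
Let C := LGraph (nodes (tg G) ++ fresh) labB (fun x => map redirect (attB x)).
Let root' := redirect (troot G).
Local Notation Res := (tg (sub C root')).

Lemma rewrite_resultE : rewrite_result G ru phi iota = sub C root'.
Proof. by []. Qed.

Lemma createdP z : z \in created -> z \in nodes (tg (sub K r)) /\ lab K z <> None.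
Proof. by rewrite mem_filter => /andP [/eqP]. Qed.

Lemma size_created : size created <= gsize (sub K r).
Proof. by rewrite size_filter count_size. Qed.

Lemma created_uniq : uniq created.
Proof. by rewrite filter_uniq // filter_uniq // (K_uniq wfr). Qed.

Lemma iota_inj : {in created &, injective iota}.
Proof. by move=> x y /createdP [xs xl] /createdP [ys yl]; apply: iinj. Qed.

Lemma pre_iota z : z \in created -> pre (iota z) = z.
Proof. by move=> zL; rewrite /pre /fresh (index_map_in iota_inj zL) nth_index. Qed.

Lemma iota_fresh z : z \in created -> iota z \notin nodes (tg G).
Proof. by move=> /createdP [zs zl]; apply: ifresh. Qed.

Lemma old_not_fresh x : x \in nodes (tg G) -> x \notin fresh.
Proof. by move=> xG; apply/mapP => -[z zL e]; subst x; rewrite (negPf (iota_fresh zL)) in xG. Qed.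

Lemma iota_mem_fresh z : z \in created -> iota z \in fresh.
Proof. exact: map_f. Qed.

Lemma mem_C x : (x \in nodes C) = (x \in nodes (tg G)) || (x \in fresh).
Proof. by rewrite /= mem_cat. Qed.

Lemma uniqC : uniq (nodes C).
Proof.
rewrite /= cat_uniq uniqG /fresh (map_inj_in_uniq iota_inj) created_uniq /= andbT.
by apply/hasP => -[x xn xG]; have := old_not_fresh xG; rewrite xn.
Qed.

Lemma labC_new z : z \in created -> lab C (iota z) = lab K z.
Proof. by move=> zL; rewrite /= /labB iota_mem_fresh // pre_iota. Qed.

Lemma attC_new z : z \in created -> att C (iota z) = map redirect (map img (att K z)).
Proof. by move=> zL; rewrite /= /attB iota_mem_fresh // pre_iota. Qed.

Lemma labC_old x : x \in nodes (tg G) -> lab C x = lab (tg G) x.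
Proof. by move=> xG; rewrite /= /labB (negPf (old_not_fresh xG)). Qed.

Lemma attC_old x : x \in nodes (tg G) -> att C x = map redirect (att (tg G) x).
Proof. by move=> xG; rewrite /= /attB (negPf (old_not_fresh xG)). Qed.

Lemma a_nodes : a \in nodes (tg G).
Proof. by case: (hphi (l_sub_l wfr)). Qed.

Lemma redex_lab_att f :
  lab K l = Some f -> lab (tg G) a = Some f /\ att (tg G) a = map phi (att K l).
Proof. by move=> e; case: (hphi (l_sub_l wfr)) => _ /(_ f e). Qed.

Lemma ht_reach x y : x \in nodes (tg G) -> reach (tg G) x y -> ht y <= ht x.
Proof.
move=> xn [p]; elim: p x xn => [|z p IH] x xn /=; first by move=> _ <-.
case/andP => e pp pl; move: e; rewrite /edge succsE // => zx.
exact: leq_trans (IH z (succG xn zx) pp pl) (ltnW (hht xn zx)).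
Qed.

Lemma ht_lt_redex z : z \in nodes (tg (sub K l)) -> z <> l -> ht (phi z) < ht a.
Proof.
move=> /sub_nodesP [zn lz] zl; case: (reach_first lz) => [// | [c cs cz]].
rewrite succsE ?(l_nodes wfr) // in cs.
case: (l_defined cr) => f lf _; have [_ attl] := redex_lab_att lf.
have pca : phi c \in att (tg G) a by rewrite attl map_f.
have [pcz _] := hom_reach wfr hphi (att_l_sub wfr cs) cz.
exact: leq_ltn_trans (ht_reach (succG a_nodes pca) pcz) (hht a_nodes pca).
Qed.

Lemma b_neq_a : b != a.
Proof.
rewrite /b /img; case e: (lab K r) => [g|].
  have rL : r \in created by rewrite mem_filter e (r_sub_r wfr).
  by apply/eqP => ea; have := iota_fresh rL; rewrite ea a_nodes.
have := ht_lt_redex (r_unlabeled_in_l wfr (r_sub_r wfr) e) (nesym (l_neq_r wfr)).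
by apply: contraTneq => ->; rewrite ltnn.
Qed.

Lemma b_inC : b \in nodes C.
Proof.
rewrite mem_C /b /img; case e: (lab K r) => [g|].
  by apply/orP; right; apply: iota_mem_fresh; rewrite mem_filter e (r_sub_r wfr).
by case: (hphi (r_unlabeled_in_l wfr (r_sub_r wfr) e)) => -> _.
Qed.

Lemma redirect_neq_a y : redirect y != a.
Proof. by rewrite /redirect; case: ifP => [_ | /negbT //]; exact: b_neq_a. Qed.

Lemma a_garbage : a \notin nodes Res.
Proof.
rewrite mem_sub_nodes negb_and; apply/orP; right; apply/negP => /reachbP h.
case: (reach_last h) => [e | [w _ aw]].
  by have := redirect_neq_a (troot G); rewrite -/root' e eqxx.
move: aw; rewrite /succs; case: ifP => // _ /= /mapP [y _ e].
by have := redirect_neq_a y; rewrite -e eqxx.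
Qed.

Lemma created_att z z' : z \in created -> z' \in att K z ->
  [/\ z' \in nodes (tg (sub K r)), reach K z z',
      (lab K z' <> None -> z' \in created)
    & (lab K z' = None -> z' \in nodes (tg (sub K l)) /\ z' <> l)].
Proof.
move=> zL zz; have [/sub_nodesP [zn rz] _] := createdP zL.
have zz' : reach K z z' by exact: reach_att.
have z'r : z' \in nodes (tg (sub K r)).
  by apply/sub_nodesP; split; [exact: (K_succ_closed wfr zn zz) | exact: reach_trans zz'].
split => //; first by move=> lz; rewrite mem_filter z'r andbT; apply/eqP.
move=> lz; split; first exact: (r_unlabeled_in_l wfr) lz.
by move=> e; subst z'; case: (l_defined cr) => f lf _; rewrite lf in lz.
Qed.

Lemma img_att z z' : z \in created -> z' \in att K z ->
  redirect (img z') = img z' /\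
  ((exists2 e, lab K z' = Some e & img z' = iota z' /\ z' \in created) \/
   (lab K z' = None /\ img z' = phi z' /\ phi z' \in nodes (tg G) /\ ht (phi z') < ht a)).
Proof.
move=> zL zz; have [_ _ hL hU] := created_att zL zz.
rewrite /img; case e: (lab K z') => [g|].
  have z'L : z' \in created by apply: hL; rewrite e.
  split; last by left; exists g.
  by rewrite /redirect; case: eqP => // ea; have := iota_fresh z'L; rewrite ea a_nodes.
have [z'l z'ne] := hU e; have hlt := ht_lt_redex z'l z'ne.
have pn : phi z' \in nodes (tg G) by case: (hphi z'l).
split; last by right.
by rewrite /redirect; case: eqP => // ea; rewrite ea ltnn in hlt.
Qed.

Lemma succsC x y : y \in succs C x ->
  (x \in nodes (tg G) /\ exists2 y', y' \in att (tg G) x & y = redirect y') \/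
  (exists2 z, z \in created & x = iota z /\ exists2 z', z' \in att K z & y = img z').
Proof.
rewrite /succs; case: ifP => // xC; rewrite mem_C in xC.
case/orP: xC => [xG | /mapP [z zL ->]].
  by rewrite attC_old // => /mapP [y' y'a ->]; left; split => //; exists y'.
rewrite attC_new // -map_comp => /mapP [z' z'a ->]; right; exists z => //; split => //.
by exists z' => //=; case: (img_att zL z'a).
Qed.

Lemma C_att_nodes x y : x \in nodes C -> y \in att C x -> y \in nodes C.
Proof.
move=> xC yx; have : y \in succs C x by rewrite succsE.
case/succsC => [[xG [y' y'a ->]] | [z zL [_ [z' z'a ->]]]].
  rewrite /redirect; case: eqP => _; first exact: b_inC.
  by rewrite mem_C (succG xG y'a).
have [_ [[e _ [-> z'L]] | [_ [-> [pn _]]]]] := img_att zL z'a.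
  by rewrite mem_C iota_mem_fresh ?orbT.
by rewrite mem_C pn.
Qed.

Lemma result_succ_closed : succ_closed Res.
Proof.
move=> x /sub_nodesP [xC rx] y yx; apply/sub_nodesP; split; first exact: C_att_nodes xC yx.
by apply: reach_trans rx _; exact: reach_att.
Qed.

Lemma result_uniq : uniq (nodes Res).
Proof. exact: filter_uniq uniqC. Qed.

(* Old nodes keep their height (scaled by D); a created node is placed between
   the redex root and its successors, ordered by the size of its subgraph in K. *)
Lemma result_height : exists ht' : nat -> nat,
  forall x y, x \in nodes Res -> y \in att Res x -> ht' y < ht' x.
Proof.
pose D := (gsize (sub K r)).+1.
exists (fun x => if x \in fresh then D * ht a + gsize (sub K (pre x)) else D * (ht x).+1).
move=> x y /sub_nodesP [xC _] yx.
have : y \in succs C x by rewrite succsE.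
case/succsC => [[xG [y' y'a ->]] | [z zL [-> [z' z'a ->]]]].
  rewrite (negPf (old_not_fresh xG)) /redirect; case: eqP => [ey' | ne]; last first.
    rewrite (negPf (old_not_fresh (succG xG y'a))); have := hht xG y'a; rewrite /D; nia.
  subst y'; have hax := hht xG y'a.
  rewrite /b /img; case e: (lab K r) => [g|].
    have rL : r \in created by rewrite mem_filter e (r_sub_r wfr).
    rewrite iota_mem_fresh // pre_iota //; move: hax; rewrite /D; nia.
  have rl := r_unlabeled_in_l wfr (r_sub_r wfr) e.
  have hr := ht_lt_redex rl (nesym (l_neq_r wfr)).
  have pn : phi r \in nodes (tg G) by case: (hphi rl).
  rewrite (negPf (old_not_fresh pn)); move: hax hr; rewrite /D; nia.
rewrite iota_mem_fresh // pre_iota //.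
have [/sub_nodesP [zn rz] _] := createdP zL.
have zr : gsize (sub K z) <= gsize (sub K r) := gsize_reach (K_uniq wfr) rz.
have [_ [[e _ [-> z'L]] | [_ [-> [pn hlt]]]]] := img_att zL z'a.
  rewrite iota_mem_fresh // pre_iota //.
  by have := gsize_att_lt (K_uniq wfr) (K_acyclic wfr) zn z'a; lia.
rewrite (negPf (old_not_fresh pn)); move: hlt zr (gsize_gt0 zn); rewrite /D; nia.
Qed.

Lemma l_label_defined f : lab K l = Some f -> ~~ isC f.
Proof. by case: (l_defined cr) => f' -> nC [<-]. Qed.

Lemma redex_nrm_arg u f : u \in nrm sep K l -> lab K l = Some f ->
  [/\ bounded_arg (tg G) f (phi u), phi u \in nodes (tg G)
    & forall w, reach (tg G) (phi u) w -> w != a].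
Proof.
move=> un lf; have [la aa] := redex_lab_att lf.
have ua : phi u \in nrm sep (tg G) a.
  by rewrite (nrm_map (G := K) (x := l) _ (h := phi)) ?map_f // la lf.
have [crG sz] := argsG a_nodes la ua.
have pn : phi u \in nodes (tg G) by case: (hphi (att_l_sub wfr (nrm_att un))).
split => // w uw; apply/eqP => ew; subst w.
by have := crG a f a_nodes uw la; rewrite (negPf (l_label_defined lf)).
Qed.

Lemma reach_old_node v : v \in nodes (tg G) -> (forall w, reach (tg G) v w -> w != a) ->
  forall w, reach C v w -> reach (tg G) v w.
Proof.
move=> vn noa w; apply: (reach_closed (Q := reach (tg G) v)); last exact: reach_refl.
move=> x y vx; have xG := reach_nodes succG vn vx.
rewrite succsE ?mem_C ?xG // attC_old // => /mapP [y' y'a ->].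
have vy' : reach (tg G) v y' by apply: reach_trans vx _; exact: reach_att.
by rewrite /redirect (negPf (noa _ vy')).
Qed.

Lemma result_nrm_old x g v : x \in nodes (tg G) -> lab (tg G) x = Some g ->
  v \in nrm sep (tg G) x -> redirect v = v /\ bounded_arg Res g v.
Proof.
move=> xG lxG vx; have [crg szg] := argsG xG lxG vx.
have vG : v \in nodes (tg G) by exact: (succG xG (nrm_att vx)).
case: (l_defined cr) => f lf nC; have [la _] := redex_lab_att lf.
have noa w : reach (tg G) v w -> w != a.
  by move=> vw; apply/eqP => ew; subst w; have := crg a f a_nodes vw la; rewrite (negPf nC).
split; first by rewrite /redirect (negPf (noa _ (reach_refl _ _))).
split.
  move=> w c /sub_nodesP [wC _] vw lw.
  have vwG := reach_old_node vG noa (reach_of_sub vw).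
  have wG := reach_nodes succG vG vwG.
  by apply: (crg _ _ wG vwG); rewrite -(labC_old wG); exact: lw.
apply: leq_trans szg; apply: uniq_leq_size; first by rewrite filter_uniq // result_uniq.
move=> w /sub_sub_nodes [wC vw _]; have vwG := reach_old_node vG noa vw.
by apply/sub_nodesP; split => //; exact: reach_nodes succG vG vwG.
Qed.

Section CreatedArg.
Variables (f : F) (u y : nat).
Hypothesis lf : lab K l = Some f.
Hypothesis un : u \in nrm sep K l.
Hypothesis uy : reach K u y.
Hypothesis yr : y \in nodes (tg (sub K r)).

Let ul := att_l_sub wfr (nrm_att un).

Lemma reach_arg_sub_l z : reach K y z -> z \in nodes K -> z \in nodes (tg (sub K l)).
Proof.
by move=> yz zn; apply: sub_nodes_trans ul _; apply/sub_nodesP; split => //; exact: reach_trans yz.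
Qed.

Lemma reach_new_node w : reach C (img y) w ->
  (exists2 z, z \in created & reach K y z /\ w = iota z) \/
  (exists z, [/\ z \in nodes K, reach K y z, lab K z = None & reach (tg G) (phi z) w]).
Proof.
have [_ _ noa] := redex_nrm_arg un lf.
apply: (reach_closed (Q := fun w => (exists2 z, z \in created & reach K y z /\ w = iota z) \/
  (exists z, [/\ z \in nodes K, reach K y z, lab K z = None & reach (tg G) (phi z) w]))).
  move=> x x' [[z1 z1L [yz1 ex]] | [z1 [z1n yz1 lz1 gx]]] e.
    subst x; rewrite succsE ?mem_C ?iota_mem_fresh ?orbT // attC_new // -map_comp in e.
    case/mapP: e => z' z'a -> /=; have [-> hz] := img_att z1L z'a.
    have [/sub_nodesP [z'n _] z1z' _ _] := created_att z1L z'a.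
    have yz' := reach_trans yz1 z1z'.
    case: hz => [[e' _ [-> z'L]] | [lz' [-> _]]]; first by left; exists z'.
    by right; exists z'; split => //; exact: reach_refl.
  have z1l := reach_arg_sub_l yz1 z1n.
  have [uz1 _] := hom_reach wfr hphi ul (reach_trans uy yz1).
  have pz1 : phi z1 \in nodes (tg G) by case: (hphi z1l).
  have xG := reach_nodes succG pz1 gx.
  rewrite succsE ?mem_C ?xG // attC_old // in e; case/mapP: e => x'' x''a ->.
  have gx'' : reach (tg G) (phi z1) x'' by apply: reach_trans gx _; exact: reach_att.
  by rewrite /redirect (negPf (noa _ (reach_trans uz1 gx''))); right; exists z1.
rewrite /img; case e: (lab K y) => [g|].
  by left; exists y; [rewrite mem_filter e yr | split => //; exact: reach_refl].
by right; exists y; split => //; [by case/sub_nodesP: yr | exact: reach_refl | exact: reach_refl].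
Qed.

Lemma created_arg_constructor w c :
  reach Res (img y) w -> lab Res w = Some c -> isC c.
Proof.
have [[crG _] _ _] := redex_nrm_arg un lf.
move=> /reach_of_sub vw lw.
case: (reach_new_node vw) => [[z1 z1L [yz1 ew]] | [z1 [z1n yz1 lz1 gw]]].
  subst w; rewrite /= -/(labB (iota z1)) in lw.
  have := labC_new z1L; rewrite /= => e; rewrite e in lw.
  have [/sub_nodesP [z1n _] _] := createdP z1L.
  exact: (reach_arg_l_constructor wfr cr (nrm_att un) z1n (reach_trans uy yz1) lw).
have pz1 : phi z1 \in nodes (tg G) by case: (hphi (reach_arg_sub_l yz1 z1n)).
have [uz1 _] := hom_reach wfr hphi ul (reach_trans uy yz1).
have wG := reach_nodes succG pz1 gw.
by apply: (crG _ _ wG (reach_trans uz1 gw)); rewrite -(labC_old wG); exact: lw.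
Qed.

Lemma created_arg_gsize : gsize (sub Res (img y)) <= size created + nrm_bound f.
Proof.
have [[_ szG] _ _] := redex_nrm_arg un lf.
have hsub : {subset nodes (tg (sub Res (img y))) <=
    map iota [seq z <- created | reachb K y z] ++
    [seq w <- nodes (tg G) | reachb (tg G) (phi u) w]}.
  move=> w /sub_sub_nodes [_ vw _]; rewrite mem_cat.
  case: (reach_new_node vw) => [[z1 z1L [yz1 ->]] | [z1 [z1n yz1 lz1 gw]]].
    by rewrite map_f // mem_filter z1L andbT; apply/reachbP.
  have pz1 : phi z1 \in nodes (tg G) by case: (hphi (reach_arg_sub_l yz1 z1n)).
  have [uz1 _] := hom_reach wfr hphi ul (reach_trans uy yz1).
  apply/orP; right; rewrite mem_filter; apply/andP; split.
    by apply/reachbP; exact: reach_trans uz1 gw.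
  exact: reach_nodes succG pz1 gw.
apply: leq_trans (uniq_leq_size (filter_uniq _ result_uniq) hsub) _.
by rewrite size_cat size_map leq_add // size_filter count_size.
Qed.

(* A closed argument contains no variable, so nothing below it is an old node. *)
Lemma created_arg_gsize_closed : gclosed (sub K u) ->
  max_shared (cap_nrm sep (sub K l)) -> gsize (sub Res (img y)) <= nrm_bound f.
Proof.
move=> uclo ms; have [[_ szG] _ _] := redex_nrm_arg un lf.
have hsub : {subset nodes (tg (sub Res (img y))) <= map iota [seq z <- created | reachb K u z]}.
  move=> w /sub_sub_nodes [_ vw _].
  case: (reach_new_node vw) => [[z1 z1L [yz1 ->]] | [z1 [z1n yz1 lz1 _]]].
    by apply: map_f; rewrite mem_filter z1L andbT; apply/reachbP; exact: reach_trans uy yz1.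
  have : z1 \in nodes (tg (sub K u)) by apply/sub_nodesP; split => //; exact: reach_trans uy yz1.
  by move/uclo; rewrite lz1.
apply: leq_trans (uniq_leq_size (filter_uniq _ result_uniq) hsub) _.
rewrite size_map; apply: leq_trans (leq_trans _ (gsize_arg_le_image wfr cr hphi un uclo ms)) szG.
apply: uniq_leq_size; first by rewrite filter_uniq // created_uniq.
move=> z1; rewrite mem_filter => /andP [uz1 /createdP [/sub_nodesP [z1n _] _]].
by rewrite mem_sub_nodes z1n.
Qed.

Lemma created_arg_gsize_var : lab K u = None -> gsize (sub Res (img y)) <= nrm_bound f.
Proof.
move=> eu; have [[_ szG] pun _] := redex_nrm_arg un lf.
have leaf z : reach K u z -> z = u.
  by apply: reach_leaf; apply: (K_unlabeled_leaf wfr _ eu); case/sub_nodesP: ul.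
have hsub : {subset nodes (tg (sub Res (img y))) <=
    [seq w <- nodes (tg G) | reachb (tg G) (phi u) w]}.
  move=> w /sub_sub_nodes [_ vw _].
  case: (reach_new_node vw) => [[z1 z1L [yz1 _]] | [z1 [z1n yz1 lz1 gw]]].
    by have [_] := createdP z1L; rewrite (leaf _ (reach_trans uy yz1)) eu.
  rewrite (leaf _ (reach_trans uy yz1)) in gw.
  by rewrite mem_filter (reach_nodes succG pun gw) andbT; apply/reachbP.
exact: leq_trans (uniq_leq_size (filter_uniq _ result_uniq) hsub) szG.
Qed.

Lemma created_arg_gsize_bound : gsize (sub Res (img y)) <= d + nrm_bound f.
Proof.
case: (classic (in_G_inf GRS ru)) => hi; last first.
  apply: leq_trans created_arg_gsize _; rewrite leq_add2r.
  exact: leq_trans size_created (hfin gru hi).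
have [ms clo _ _] := hinf gru hi.
apply: leq_trans (leq_addl d _).
case eu: (lab K u) => [gu|]; last exact: created_arg_gsize_var.
by apply: created_arg_gsize_closed ms; apply: clo un _; rewrite eu.
Qed.

End CreatedArg.

(* Precedence termination sends the normal arguments of a created node below
   those of the redex, and lowers the rank, which pays for the growth by d. *)
Lemma result_nrm_new z g y : z \in created -> lab K z = Some g -> y \in nrm sep K z ->
  bounded_arg Res g (img y).
Proof.
move=> zL lzK yn; have [zs _] := createdP zL; have [zn rz] := sub_nodesP _ _ _ zs.
have [u un uy] := pt_nrm_below wfr cr hsep hprec ptr zn rz yn.
have [yr _ _ _] := created_att zL (nrm_att yn).
have [f' lf pgf] := pt_lab_below ptr zs lzK.
split => [w c _|]; first exact: (@created_arg_constructor _ u y lf un uy yr w c).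
apply: leq_trans (created_arg_gsize_bound lf un uy yr) _.
by rewrite addnC; exact: nrm_bound_rank (rank_lt pgf).
Qed.

Lemma result_nrm_args_bounded : nrm_args_bounded Res.
Proof.
move=> x g v /sub_nodesP [xC _] lx; rewrite mem_C in xC.
case/orP: xC => [xG | /mapP [z zL exz]]; last subst x.
  have lxG : lab (tg G) x = Some g by rewrite -labC_old.
  have -> : nrm sep Res x = map redirect (nrm sep (tg G) x).
    by apply: nrm_map; [exact: labC_old | exact: attC_old].
  by case/mapP => v' v'n ->; have [-> ] := result_nrm_old xG lxG v'n.
have lzK : lab K z = Some g by rewrite -labC_new.
have -> : nrm sep Res (iota z) = map (fun y => redirect (img y)) (nrm sep K z).
  by apply: nrm_map; [exact: labC_new | rewrite attC_new // -map_comp].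
case/mapP => y yn ->; have [-> _] := img_att zL (nrm_att yn).
exact: (result_nrm_new zL lzK yn).
Qed.

Lemma size_created_lt : size created < step_bound.
Proof.
apply: leq_ltn_trans size_created _.
case: (classic (in_G_inf GRS ru)) => hi; last exact: leq_ltn_trans (hfin gru hi) step_bound_gt_d.
have [ms clo small rhs] := hinf gru hi.
have [f lf _] := l_defined cr.
have himage u : u \in nrm sep K l -> lab K u <> None -> gsize (sub (tg G) (phi u)) <= arg_bound.
  by move=> un _; have [[_ sz] _ _] := redex_nrm_arg un lf; exact: leq_trans sz (nrm_bound_le f).
apply: leq_ltn_trans (gsize_rhs_inf wfr cr hphi hard himage ms clo small rhs hsep hprec ptr) _.
by rewrite /step_bound.
Qed.

(* Every created label is below the root label f, so it weighs at most
   step_bound ^ (rank f).-1, and fewer than step_bound nodes are created. *)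
Lemma created_weight_lt f : lab K l = Some f ->
  \sum_(z <- created) weight (lab K z) < step_bound ^ rank f.
Proof.
move=> lf.
have hw z : z \in created -> weight (lab K z) <= step_bound ^ (rank f).-1 /\ 0 < rank f.
  move=> zL; have [zs lz] := createdP zL.
  case e: (lab K z) => [g|]; last by [].
  have [f' lf' pgf] := pt_lab_below ptr zs e.
  rewrite lf in lf'; case: lf' => ef; subst f'.
  have rgf := rank_lt pgf; split; last exact: leq_ltn_trans rgf.
  rewrite /weight; case: (isC g) => //; apply: leq_pexp2l; first exact: step_bound_gt0.
  by rewrite -ltnS (ltn_predK rgf).
case eL: created => [|z0 s]; first by rewrite big_nil expn_gt0 step_bound_gt0.
have z0L : z0 \in created by rewrite eL inE eqxx.
have [_ rf] := hw z0 z0L.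
rewrite -eL; apply: leq_ltn_trans (sum_le_size (c := step_bound ^ (rank f).-1) _) _.
  by move=> z zL; case: (hw z zL).
by rewrite -{2}(prednK rf) expnS ltn_mul2r size_created_lt andbT expn_gt0 step_bound_gt0.
Qed.

Lemma potential_step : potential (rewrite_result G ru phi iota) < potential G.
Proof.
rewrite rewrite_resultE /potential /= big_filter.
have [f lf nC] := l_defined cr; have [la _] := redex_lab_att lf.
apply: (@leq_ltn_trans (\sum_(x <- nodes C | x != a) weight (labB x))).
  apply: leq_sum_subpred => x xC rx; apply/eqP => e.
  by move: a_garbage; rewrite mem_sub_nodes -e xC rx.
rewrite big_cat /= (bigD1_seq a a_nodes uniqG) /= la /weight (negPf nC) -/weight.
have old : \sum_(i <- nodes (tg G) | i != a) weight (labB i) =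
           \sum_(i <- nodes (tg G) | i != a) weight (lab (tg G) i).
  rewrite big_seq_cond [RHS]big_seq_cond; apply: eq_bigr => i /andP [iG _].
  by have := labC_old iG => /= ->.
have new : \sum_(i <- fresh | i != a) weight (labB i) <= \sum_(z <- created) weight (lab K z).
  apply: leq_trans (_ : \sum_(i <- fresh) weight (labB i) <= _).
    by rewrite big_mkcond /=; apply: leq_sum => i _; case: ifP.
  rewrite big_map big_seq [X in _ <= X]big_seq; apply: eq_leq; apply: eq_bigr => z zL.
  by have := labC_new zL => /= ->.
rewrite old [X in X < _]addnC ltn_add2r; exact: leq_ltn_trans new (created_weight_lt lf).
Qed.

Lemma gsize_step : gsize (rewrite_result G ru phi iota) <= gsize G + step_bound.
Proof.
rewrite rewrite_resultE /gsize /= size_filter; apply: leq_trans (count_size _ _) _.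
by rewrite size_cat size_map leq_add2l ltnW // size_created_lt.
Qed.

Lemma invariant_result : invariant (rewrite_result G ru phi iota).
Proof.
rewrite rewrite_resultE; split;
  [exact: result_uniq | exact: result_succ_closed | exact: result_height |
   exact: result_nrm_args_bounded].
Qed.

End OneStep.

Lemma tg_eq_invariant (H H' : tgraph F) : tg_eq H H' -> invariant H' -> invariant H.
Proof.
move=> teq [u2 i2 [ht hht] i4]; have [_ pm hl] := teq.
have mem x : (x \in nodes (tg H)) = (x \in nodes (tg H')) by apply: perm_mem.
split; first by rewrite (perm_uniq pm).
- move=> x xn y yx; have [_ ea] := hl x xn; rewrite mem.
  by apply: (i2 x); [rewrite -mem | rewrite -ea].
- by exists ht => x y xn yx; have [_ ea] := hl x xn; apply: hht; [rewrite -mem | rewrite -ea].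
move=> x g v xn lx vx; have [la ea] := hl x xn.
have [crH sz] : bounded_arg (tg H') g v.
  by apply: (i4 x); [rewrite -mem | rewrite -la | move: vx; rewrite /nrm la ea].
split; last by rewrite (tg_eq_gsize _ teq).
move=> w c wn /reachbP vw lw; have [lw' _] := hl w wn.
by apply: (crH w c); [rewrite -mem | apply/reachbP; rewrite -(tg_eq_reachb _ _ teq) | rewrite -lw'].
Qed.

Lemma tg_eq_potential (H H' : tgraph F) : tg_eq H H' -> potential H = potential H'.
Proof.
case=> _ pm hl; rewrite /potential -(perm_big _ pm) /= big_seq [RHS]big_seq.
by apply: eq_bigr => x xn; have [-> _] := hl x xn.
Qed.

Lemma step_invariant (G H : tgraph F) : invariant G -> step GRS G H ->
  [/\ invariant H, potential H < potential G & gsize H <= gsize G + step_bound].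
Proof.
case=> uG i2 [ht hht] i4 [ru [phi [iota [gr hphi iinj ifresh teq]]]].
split; first exact: (tg_eq_invariant teq (invariant_result uG i2 hht i4 gr hphi iinj ifresh)).
  by rewrite (tg_eq_potential teq); exact: (potential_step uG i2 hht i4 gr hphi iinj ifresh).
by have [_ pm _] := teq; rewrite /gsize (perm_size pm); exact: (gsize_step i4 iota gr hphi).
Qed.

Lemma nsteps_invariant m (G H : tgraph F) : nsteps GRS m G H -> invariant G ->
  [/\ invariant H, m + potential H <= potential G & gsize H <= gsize G + m * step_bound].
Proof.
elim=> {m G H} [G | m G G' H st _ IH] iG; first by split; rewrite ?mul0n ?addn0.
have [iG' lt sz] := step_invariant iG st.
have [iH le sz'] := IH iG'.
split => //; first by rewrite addSn; apply: leq_ltn_trans le lt.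
by move: sz sz'; rewrite mulSn; lia.
Qed.

Section Initial.
Variable G0 : tgraph F.
Hypothesis wf0 : wf_tgraph ar G0.
Hypothesis basic0 : basic isC G0.
Hypothesis hN : size (nodes_below (tg G0) (nrm sep (tg G0) (troot G0))) <= n.

Lemma init_constructor x c :
  x \in nodes (tg G0) -> x != troot G0 -> lab (tg G0) x = Some c -> isC c.
Proof.
case: wf0 => _ rn rr; case: basic0 => _ bas xn xr lx.
have /reachbP := rr x xn; case/reach_first => [e | [c0 cs cx]]; first by rewrite e eqxx in xr.
rewrite succsE // in cs; apply: (bas c0 cs x c) => //; exact/sub_nodesP.
Qed.

Lemma invariant_init : invariant G0.
Proof.
case: wf0 => [[u0 hwf ac] rn _]; case: basic0 => _ bas.
split => //; first by move=> x /hwf [_ /allP].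
  by exists (fun x => gsize (sub (tg G0) x)) => x y xn yx; exact: gsize_att_lt.
move=> x g v xn lx vx.
case: (eqVneq x (troot G0)) => [ex | xr]; last first.
  by rewrite (nrm_constructor hsep lx (init_constructor xn xr lx)) in vx.
subst x; have va := nrm_att vx; split.
  by move=> w c wn vw lw; apply: (bas v va w c) => //; apply/sub_nodesP.
apply: leq_trans (leq_trans hN (leq_addr _ _)).
apply: uniq_leq_size; first by rewrite filter_uniq.
by move=> w wv; apply/nodes_belowP; exists v.
Qed.

Lemma potential_init : potential G0 <= step_bound ^ #|F|.
Proof.
case: wf0 => [[u0 _ _] rn _]; case: basic0 => -[f0 lf0 nf0] _.
rewrite /potential (bigD1_seq (troot G0)) //= /weight lf0 (negPf nf0).
rewrite big_seq_cond big1 ?addn0; last first.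
  move=> x /andP [xn xr]; case e: (lab (tg G0) x) => [c|] //.
  by rewrite (init_constructor xn xr e).
by apply: leq_pexp2l; [exact: step_bound_gt0 | exact: rank_le].
Qed.

End Initial.

End Derivations.

Lemma size_le_split (s N : seq nat) : uniq s ->
  size s <= size N + size [seq v <- s | v \notin N].
Proof.
move=> us; rewrite size_filter -[size s](count_predC (mem N)) leq_add2r -size_filter.
by apply: uniq_leq_size; [rewrite filter_uniq | move=> x; rewrite mem_filter => /andP []].
Qed.

Theorem mainTheorem7 (F : finType) (ar : F -> nat) (isC : pred F)
  (GRS : rule F -> Prop) (sep : F -> nat -> bool) (prec : rel F) (d : nat) :
  (* constructor GRS *)
  (forall ru, GRS ru -> wf_rule ar ru /\ constructor_rule isC ru) ->
  (* precedence terminating with argument separation *)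
  separation isC sep ->
  precedence isC prec ->
  (forall ru, GRS ru -> pt sep prec (rK ru) (rr ru) (rl ru)) ->
  (* the bound d *)
  (forall f, ar f <= d) ->
  (forall ru, GRS ru -> ~ in_G_inf GRS ru -> gsize (sub (rK ru) (rr ru)) <= d) ->
  (forall ru, GRS ru -> in_G_inf GRS ru ->
     let K := rK ru in
     [/\ max_shared (cap_nrm sep (sub K (rl ru))),
         (forall v, v \in nrm sep K (rl ru) -> lab K v <> None -> gclosed (sub K v)),
         size (undup ([seq v <- nrm sep K (rl ru) | lab K v == None]
                      ++ nodes_below K (safe sep K (rl ru)))) <= d
       & gsize (sub K (rr ru)) <=
           gsize (sub K (rl ru)) + size (nodes_below K (nrm sep K (rr ru)))]) ->
  exists p : {poly nat}, forall (G0 G : tgraph F) (m : nat),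
    wf_tgraph ar G0 -> gclosed G0 -> basic isC G0 -> wf_tgraph ar G ->
    nsteps GRS m G0 G ->
    let N := nodes_below (tg G0) (nrm sep (tg G0) (troot G0)) in
    m <= horner p (size N) /\
    gsize G <= horner p (size N) + size [seq v <- nodes (tg G0) | v \notin N].
Proof.
move=> hgrs hsep hprec hpt hard hfin hinf.
pose c := 3 + 4 * d + 2 * (#|F| * d * d).
exists ('X + (c%:P * ('X + 1)) ^+ #|F|.+1)%R => G0 G m wf0 _ b0 _ st N.
rewrite hornerD hornerX horner_exp hornerM hornerC hornerD hornerX hornerC.
change (m <= size N + (c * (size N + 1)) ^ #|F|.+1 /\
  gsize G <= size N + (c * (size N + 1)) ^ #|F|.+1 + size [seq v <- nodes (tg G0) | v \notin N]).
have [_ le sz] := nsteps_invariant hgrs hsep hprec hpt hard hfin hinf st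
  (invariant_init prec d hsep wf0 b0 (leqnn (size N))).
have p0 := potential_init prec d (size N) wf0 b0.
have hG0 := size_le_split N (let: And3 (And3 u0 _ _) _ _ := wf0 in u0).
have hB := step_bound_linear F d (size N).
set B := step_bound F d (size N) in sz p0 hB; set X := c * (size N + 1).
have hm : m <= B ^ #|F| by apply: leq_trans (leq_addr _ _) (leq_trans le p0).
have hmB : m * B <= X ^ #|F|.+1.
  by apply: leq_trans (leq_mul hm (leqnn B)) _; rewrite -expnSr leq_exp2r.
split; last by rewrite /gsize in sz hG0 *; lia.
by apply: leq_trans (leq_trans (leq_pmulr m (step_bound_gt0 F d (size N))) hmB) (leq_addl _ _).
Qed.
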